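(* Let $n\equiv 3\pmod 4$ with $n>3$. Let $1\le r\le m$, let $M_r\in\mathfrak{C}_r$, and suppose $\det\tilde M_r>0$. If $E_m^*\in\mathfrak{E}_m$ satisfies $\det E_m^*=\max\{\det E: E\in\mathfrak{E}_m\}$, then $\det\tilde E_m^*>0$.
   Context: Fix an integer $n\equiv 3\pmod 4$, $n>3$. For $m\ge1$, $\mathfrak{C}_m$ is the set of symmetric positive definite $m\times m$ integer matrices $C=(c_{ij})$ with $c_{ii}=n$ and $c_{ij}\equiv n\pmod 4$ for all $i,j$. Given a fixed $M_r\in\mathfrak{C}_r$, for $m\ge r$, $\mathfrak{E}_m$ is the set of $E_m\in\mathfrak{C}_m$ whose leading $r\times r$ submatrix is $M_r$. For a square matrix $C$ of order $m$, $\tilde C$ denotes the matrix obtained from $C$ by replacing its $(m,m)$ entry by $3$. *)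

From HB Require Import structures.
From mathcomp Require Import all_boot all_order all_algebra.
From Stdlib Require Rdefinitions.
From mathcomp Require Import Rstruct.
Set Implicit Arguments. Unset Strict Implicit. Unset Printing Implicit Defensive.
Import Order.TTheory GRing.Theory Num.Theory.
Local Open Scope ring_scope.

Definition posdef (m : nat) (C : 'M[int]_m) : Prop :=
  forall x : 'cV[Rdefinitions.R]_m, x != 0 ->
    0 < (x^T *m map_mx (fun z : int => z%:~R : Rdefinitions.R) C *m x) 0 0.

Definition inCm (n m : nat) (C : 'M[int]_m) : Prop :=
  [/\ C^T = C, posdef C,
      forall i : 'I_m, C i i = n%:Z &
      forall i j : 'I_m, modz (C i j) 4 = modz n%:Z 4].

Definition leading (r m : nat) (M : 'M[int]_r) (E : 'M[int]_m) : Prop :=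
  forall (i j : 'I_r) (i' j' : 'I_m),
    val i = val i' -> val j = val j' -> E i' j' = M i j.

Definition inEm (n r m : nat) (M : 'M[int]_r) (E : 'M[int]_m) : Prop :=
  inCm n E /\ leading M E.

Definition tilde (m : nat) (C : 'M[int]_m) : 'M[int]_m :=
  \matrix_(i, j) if (val i == m.-1) && (val j == m.-1) then 3 else C i j.

From HB Require Import structures.
From mathcomp Require Import all_boot all_order all_algebra.
From mathcomp Require Import ring zify.
From mathcomp Require Import Rstruct.
Set Implicit Arguments. Unset Strict Implicit. Unset Printing Implicit Defensive.
Import Order.TTheory GRing.Theory Num.Theory.
Local Open Scope ring_scope.

(* Write [C~] for [tilde C] and [C'] for the leading principal submatrix of
   order [m - 1].  Expanding along the last row, [det C = det C~ + (n - 3) det C']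
   for every [C] in [C_m].  Suppose [det E~ <= 0] for some [E] in [E_m].  By
   induction on [m] there is [F] in [E_(m-1)] with [det F~ > 0] and
   [det F >= det E'] (take [F = E'] when [det E'~ > 0]; at the bottom [E = M]).
   Border [F] with a copy of the last row and column of [F~] and diagonal entry
   [n]: this gives [E+] in [E_m], because the quadratic form of [E+~] at
   [(y, a, b)] is that of [F~] at [(y, a + b)] plus [(n - 3) a^2], and [F~] is
   positive definite by the Schur-complement form of Sylvester's criterion.
   Then [det E <= (n - 3) det E' <= (n - 3) det F < det E+], so no maximiser
   has [det E~ <= 0]. *)

Definition principal (T : Type) k (A : 'M[T]_k.+1) : 'M[T]_k :=
  row' ord_max (col' ord_max A).

Lemma principalE (T : Type) k (A : 'M[T]_k.+1) i j :
  principal A i j = A (lift ord_max i) (lift ord_max j).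
Proof. by rewrite !mxE. Qed.

Lemma trmx_principal (T : Type) k (A : 'M[T]_k.+1) : (principal A)^T = principal A^T.
Proof. by apply/matrixP => i j; rewrite !mxE. Qed.

Lemma lift_max_neq k (i : 'I_k) : (lift ord_max i == ord_max :> 'I_k.+1) = false.
Proof. by rewrite eq_sym (negbTE (neq_lift _ _)). Qed.

Section Determinant.
Variable R : comNzRingType.

Lemma cofactor_max k (A : 'M[R]_k.+1) : cofactor A ord_max ord_max = \det (principal A).
Proof. by rewrite /cofactor addnn -mul2n exprM sqrrN !expr1n mul1r. Qed.

Lemma expand_det_last_col k (A : 'M[R]_k.+1) :
  (forall i, i != ord_max -> A i ord_max = 0) ->
  \det A = A ord_max ord_max * \det (principal A).
Proof.
move=> A0; rewrite (expand_det_col _ ord_max) (bigD1_ord ord_max) //= cofactor_max.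
by rewrite big1 ?addr0 // => i _; rewrite A0 ?mul0r ?lift_max_neq.
Qed.

Lemma expand_det_last_row k (A : 'M[R]_k.+1) :
  (forall j, j != ord_max -> A ord_max j = 0) ->
  \det A = A ord_max ord_max * \det (principal A).
Proof.
move=> A0; rewrite -det_tr expand_det_last_col => [|i /A0]; last by rewrite mxE.
by rewrite mxE -det_tr; congr (_ * \det _); apply/matrixP => i j; rewrite !mxE.
Qed.

Lemma det_add_delta_max k (A : 'M[R]_k.+1) c :
  \det (A + c *: delta_mx ord_max ord_max) = \det A + c * \det (principal A).
Proof.
rewrite !(expand_det_row _ ord_max) !(bigD1_ord ord_max) //=.
have cof j :
    cofactor (A + c *: delta_mx ord_max ord_max) ord_max j = cofactor A ord_max j.
  rewrite /cofactor; congr (_ * \det _); apply/matrixP => a b.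
  by rewrite !mxE lift_max_neq mulr0 addr0.
under eq_bigr do rewrite cof !mxE lift_max_neq andbF mulr0 addr0.
rewrite cof !mxE !eqxx mulr1 cofactor_max; ring.
Qed.

End Determinant.

Definition merge_last {k} (i : 'I_k.+2) : 'I_k.+1 := odflt ord_max (unlift ord_max i).

Lemma merge_last_lift k (i : 'I_k.+1) : merge_last (lift ord_max i) = i.
Proof. by rewrite /merge_last liftK. Qed.

Lemma merge_last_max k : merge_last (ord_max : 'I_k.+2) = ord_max.
Proof. by rewrite /merge_last unlift_none. Qed.

Section PositiveDefinite.
Variable R : realFieldType.

Definition qform k (A : 'M[R]_k) (x : 'cV[R]_k) : R := (x^T *m A *m x) 0 0.

Definition posdefmx k (A : 'M[R]_k) : Prop := forall x, x != 0 -> 0 < qform A x.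

Definition rcons_cV k (y : 'cV[R]_k) (c : R) : 'cV[R]_k.+1 :=
  \col_i oapp (fun a => y a 0) c (unlift ord_max i).

Lemma rcons_cV_row' k (y : 'cV[R]_k) c : row' ord_max (rcons_cV y c) = y.
Proof. by apply/matrixP => i j; rewrite !mxE liftK (ord1 j). Qed.

Lemma rcons_cV_max k (y : 'cV[R]_k) c : rcons_cV y c ord_max 0 = c.
Proof. by rewrite mxE unlift_none. Qed.

Lemma rcons_cV_eq0 k (y : 'cV[R]_k) c : (rcons_cV y c == 0) = (y == 0) && (c == 0).
Proof.
apply/eqP/andP => [y0|[/eqP-> /eqP->]].
  split; apply/eqP; last by rewrite -(rcons_cV_max y c) y0 mxE.
  by rewrite -(rcons_cV_row' y c) y0; apply/matrixP => i j; rewrite !mxE.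
by apply/matrixP => i j; rewrite !mxE; case: unliftP => [a|] /=; rewrite ?mxE.
Qed.

Lemma rcons_cV_split k (x : 'cV[R]_k.+1) : x = rcons_cV (row' ord_max x) (x ord_max 0).
Proof.
apply/matrixP => i j; rewrite (ord1 j) !mxE.
by case: unliftP => [a|] -> /=; rewrite ?mxE.
Qed.

Lemma qformE k (A : 'M[R]_k) x : qform A x = \sum_i \sum_j x i 0 * A i j * x j 0.
Proof.
rewrite /qform mxE exchange_big /=; apply: eq_bigr => i _.
by rewrite mxE big_distrl /=; apply: eq_bigr => j _; rewrite !mxE.
Qed.

Lemma qformDl k (A B : 'M[R]_k) x : qform (A + B) x = qform A x + qform B x.
Proof. by rewrite /qform mulmxDr mulmxDl mxE. Qed.

Lemma qformZl k c (A : 'M[R]_k) x : qform (c *: A) x = c * qform A x.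
Proof. by rewrite /qform -scalemxAr -scalemxAl mxE. Qed.

Lemma qform_delta k (i : 'I_k) x : qform (delta_mx i i) x = x i 0 ^+ 2.
Proof.
case: k i x => [|k] i x; first by case: i.
rewrite qformE (bigD1_ord i) //= (bigD1_ord i) //= !mxE !eqxx mulr1.
rewrite big1 ?addr0 => [|j _]; last by rewrite mxE lift_eqF ?andbF ?mulr0 ?mul0r.
rewrite big1 ?addr0 ?expr2 // => j _; apply: big1 => l _.
by rewrite mxE lift_eqF ?andbF ?mulr0 ?mul0r.
Qed.

Lemma qform_add_delta k (A : 'M[R]_k) c i x :
  qform (A + c *: delta_mx i i) x = qform A x + c * x i 0 ^+ 2.
Proof. by rewrite qformDl qformZl qform_delta. Qed.

Lemma qform_mulmx k l (P : 'M[R]_(k, l)) (A : 'M[R]_k) x :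
  qform (P^T *m A *m P) x = qform A (P *m x).
Proof. by rewrite /qform trmx_mul !mulmxA. Qed.

Lemma qform0 k (A : 'M[R]_k) : qform A 0 = 0.
Proof. by rewrite /qform mulmx0 mxE. Qed.

Lemma posdefmx_ge0 k (A : 'M[R]_k) x : posdefmx A -> 0 <= qform A x.
Proof.
move=> pA; have [->|x0] := eqVneq x 0; first by rewrite qform0.
exact/ltW/pA.
Qed.

Lemma posdefmx_add_delta k (A : 'M[R]_k) c i :
  posdefmx A -> 0 <= c -> posdefmx (A + c *: delta_mx i i).
Proof.
move=> pA c0 x x0; rewrite qform_add_delta.
by apply: ltr_wpDr; [rewrite mulr_ge0 ?sqr_ge0 | exact: pA].
Qed.

Lemma cV_dotC k (x y : 'cV[R]_k) : x^T *m y = y^T *m x.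
Proof.
by rewrite -[y in LHS]trmxK -trmx_mul; apply/matrixP => i j; rewrite !ord1 mxE.
Qed.

Section Schur.
Variables (k : nat) (A : 'M[R]_k.+1).
Hypothesis symA : A^T = A.
Local Notation F := (principal A).
Local Notation u := (row' ord_max (col ord_max A)).

Let symA_entry i j : A i j = A j i.
Proof. by rewrite -[in LHS]symA mxE. Qed.

Lemma trmx_principal_sym : F^T = F.
Proof. by rewrite trmx_principal symA. Qed.

Lemma qform_split x :
  qform A x = qform F (row' ord_max x)
    + 2 * x ord_max 0 * (u^T *m row' ord_max x) 0 0
    + A ord_max ord_max * x ord_max 0 ^+ 2.
Proof.
pose T := \sum_(i < k) A (lift ord_max i) ord_max * x (lift ord_max i) 0.
have -> : (u^T *m row' ord_max x) 0 0 = T.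
  by rewrite mxE; apply: eq_bigr => i _; rewrite !mxE.
rewrite !qformE (bigD1_ord ord_max) //= (bigD1_ord ord_max) //=.
have -> : \sum_(i < k) x ord_max 0 * A ord_max (lift ord_max i) * x (lift ord_max i) 0
    = x ord_max 0 * T.
  by rewrite big_distrr; apply: eq_bigr => i _; rewrite symA_entry /= mulrA.
have -> : \sum_(i < k) \sum_(j < k.+1) x (lift ord_max i) 0 * A (lift ord_max i) j * x j 0
    = x ord_max 0 * T + \sum_(i < k) \sum_(j < k)
        x (lift ord_max i) 0 * A (lift ord_max i) (lift ord_max j) * x (lift ord_max j) 0.
  rewrite big_distrr -big_split; apply: eq_bigr => i _ /=.
  by rewrite (bigD1_ord ord_max) //=; ring.
under [in RHS]eq_bigr do under eq_bigr do rewrite !mxE.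
ring.
Qed.

Lemma mulmx_rcons_cV0 y :
  A *m rcons_cV y 0 = rcons_cV (F *m y) ((u^T *m y) 0 0).
Proof.
apply/matrixP => i j; rewrite (ord1 j) mxE (bigD1_ord ord_max) //=.
rewrite rcons_cV_max mulr0 add0r.
rewrite [RHS]mxE; case: unliftP => [a|] -> /=; rewrite !mxE; apply: eq_bigr => b _.
  by rewrite !mxE liftK.
by rewrite !mxE liftK symA_entry.
Qed.

Hypothesis unitF : F \in unitmx.
Local Notation w := (invmx F *m u).

Definition schur_complement := A ord_max ord_max - (u^T *m w) 0 0.

Lemma qform_schur x :
  qform A x = qform F (row' ord_max x + x ord_max 0 *: w)
    + schur_complement * x ord_max 0 ^+ 2.
Proof.
set y := row' ord_max x; set c : R := x ord_max 0.
have Fw : F *m w = u by rewrite mulKVmx.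
have wF : w^T *m F = u^T by rewrite -[X in _ *m X]trmx_principal_sym -trmx_mul Fw.
have -> : qform F (y + c *: w)
    = qform F y + 2 * c * (u^T *m y) 0 0 + c ^+ 2 * (u^T *m w) 0 0.
  rewrite /qform.
  have -> : (y + c *: w)^T = y^T + c *: w^T by rewrite linearD linearZ.
  rewrite !mulmxDl !mulmxDr.
  rewrite -!scalemxAl -!scalemxAr -![_ *m F *m w]mulmxA Fw wF (cV_dotC y) (cV_dotC w).
  by rewrite !mxE; ring.
by rewrite qform_split -/y -/c /schur_complement; ring.
Qed.

Lemma det_schur : \det A = \det F * schur_complement.
Proof.
(* Right multiplication by [U] subtracts from the last column of [A] the
   combination [w] of the other columns, which leaves [schur_complement] as the
   only nonzero entry of that column. *)
pose U : 'M[R]_k.+1 := 1%:M - rcons_cV w 0 *m delta_mx 0 ord_max.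
have detU : \det U = 1.
  rewrite expand_det_last_row => [|j jm]; last first.
    by rewrite !mxE big_ord1 rcons_cV_max mul0r subr0 eq_sym (negPf jm).
  rewrite !mxE big_ord1 rcons_cV_max mul0r subr0 eqxx mul1r -(@det1 _ k).
  apply: congr1; apply/matrixP => a b.
  by rewrite !mxE big_ord1 !mxE lift_max_neq andbF mulr0 subr0 (inj_eq lift_inj).
have AU : A *m U = A - rcons_cV u ((u^T *m w) 0 0) *m delta_mx 0 ord_max.
  by rewrite mulmxBr mulmx1 mulmxA mulmx_rcons_cV0 mulKVmx.
rewrite -[LHS]mulr1 -detU -det_mulmx AU expand_det_last_col => [|i im]; last first.
  rewrite !mxE big_ord1 !mxE eqxx mulr1.
  by case: unliftP im => [a -> _|->]; rewrite ?eqxx //= !mxE subrr.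
rewrite mulrC; congr (_ * _).
  apply: congr1; apply/matrixP => a b.
  by rewrite !mxE big_ord1 !mxE lift_max_neq andbF mulr0 subr0.
by rewrite /schur_complement !mxE big_ord1 !mxE unlift_none eqxx mulr1.
Qed.

End Schur.

Lemma posdefmx_principal k (A : 'M[R]_k.+1) :
  A^T = A -> posdefmx A -> posdefmx (principal A).
Proof.
move=> symA pA y y0.
have := pA (rcons_cV y 0); rewrite rcons_cV_eq0 (negPf y0) => /(_ isT).
by rewrite qform_split // rcons_cV_row' rcons_cV_max expr0n /= !mulr0 mul0r !addr0.
Qed.

Lemma posdefmx_det_gt0 k (A : 'M[R]_k) : A^T = A -> posdefmx A -> 0 < \det A.
Proof.
elim: k A => [|k IH] A symA pA; first by rewrite det_mx00.
have detF : 0 < \det (principal A).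
  by apply: IH; [exact: trmx_principal_sym | exact: posdefmx_principal].
have unitF : principal A \in unitmx by rewrite unitmxE unitfE lt0r_neq0.
rewrite (det_schur symA unitF) pmulr_rgt0 //.
set w := invmx (principal A) *m row' ord_max (col ord_max A).
have := pA (rcons_cV (- w) 1); rewrite rcons_cV_eq0 oner_eq0 andbF => /(_ isT).
rewrite (qform_schur symA unitF) rcons_cV_row' rcons_cV_max scale1r addNr.
by rewrite qform0 add0r expr1n mulr1.
Qed.

Lemma posdefmx_of_det k (A : 'M[R]_k.+1) :
  A^T = A -> posdefmx (principal A) -> 0 < \det A -> posdefmx A.
Proof.
move=> symA pF dA.
have unitF : principal A \in unitmx.
  by rewrite unitmxE unitfE lt0r_neq0 // posdefmx_det_gt0 // trmx_principal_sym.
have s_gt0 : 0 < schur_complement A.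
  move: dA; rewrite (det_schur symA unitF) pmulr_rgt0 //.
  by rewrite posdefmx_det_gt0 // trmx_principal_sym.
move=> x x0; rewrite (qform_schur symA unitF).
have [xm0|xm0] := eqVneq (x ord_max 0) 0.
  rewrite xm0 scale0r addr0 expr0n mulr0 addr0; apply: pF.
  by apply: contraNneq x0 => x'0; rewrite (rcons_cV_split x) x'0 xm0 rcons_cV_eq0 !eqxx.
by apply: ltr_wpDl; [exact: posdefmx_ge0 | rewrite mulr_gt0 // exprn_even_gt0].
Qed.

Lemma mxsub_merge_last k (A : 'M[R]_k.+1) :
  mxsub merge_last merge_last A
  = (colsub merge_last 1%:M)^T *m A *m colsub merge_last 1%:M.
Proof.
rewrite trmx_mxsub trmx1 mul_rowsub_mx mul1mx mulmx_colsub mulmx1.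
by apply/matrixP => i j; rewrite !mxE.
Qed.

Lemma mul_colsub_merge_last k (x : 'cV[R]_k.+2) :
  colsub merge_last 1%:M *m x = row' ord_max x + x ord_max 0 *: delta_mx ord_max 0.
Proof.
apply/matrixP => a j; rewrite (ord1 j) !mxE (bigD1_ord ord_max) //= addrC.
rewrite !mxE merge_last_max; congr (_ + _); last by rewrite andbT mulrC.
have -> : x (lift ord_max a) 0 = (1%:M *m (row' ord_max x : 'cV_k.+1)) a 0.
  by rewrite mul1mx mxE.
by rewrite mxE; apply: eq_bigr => b _; rewrite !mxE merge_last_lift.
Qed.

Lemma posdefmx_merge_last k (A : 'M[R]_k.+1) c :
  posdefmx A -> 0 < c ->
  posdefmx (mxsub merge_last merge_last A
            + c *: delta_mx (lift ord_max ord_max) (lift ord_max ord_max)).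
Proof.
move=> pA c0 x x0.
rewrite qform_add_delta mxsub_merge_last qform_mulmx mul_colsub_merge_last.
set y := row' ord_max x + _.
have [y0|y0] := eqVneq y 0; last first.
  by apply: ltr_pwDl; [exact: pA | rewrite mulr_ge0 ?sqr_ge0 // ltW].
rewrite y0 qform0 add0r mulr_gt0 // exprn_even_gt0 //=.
apply: contraNneq x0 => xk0.
have xm0 : x ord_max 0 = 0.
  have := congr1 (fun z : 'cV[R]_k.+1 => z ord_max 0) y0.
  by rewrite /y !mxE eqxx mulr1 xk0 add0r.
move: y0; rewrite /y xm0 scale0r addr0 => x'0.
by rewrite (rcons_cV_split x) x'0 xm0 rcons_cV_eq0 !eqxx.
Qed.

End PositiveDefinite.

Local Notation realmx C := (map_mx (fun z : int => z%:~R : Rdefinitions.R) C).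

Lemma posdefE k (C : 'M[int]_k) : posdef C <-> posdefmx (realmx C).
Proof. by []. Qed.

Lemma det_realmx k (C : 'M[int]_k) : \det (realmx C) = (\det C)%:~R.
Proof. exact: det_map_mx. Qed.

Lemma realmx_principal k (C : 'M[int]_k.+1) : realmx (principal C) = principal (realmx C).
Proof. by apply/matrixP => i j; rewrite !mxE. Qed.

Lemma posdef_det_gt0 k (C : 'M[int]_k) : C^T = C -> posdef C -> 0 < \det C.
Proof.
move=> symC /posdefE/posdefmx_det_gt0; rewrite det_realmx ltr0z; apply.
by rewrite map_trmx symC.
Qed.

Section Tilde.
Variables (k : nat) (C : 'M[int]_k.+1).

Lemma tildeE i j :
  tilde C i j = if (i == ord_max) && (j == ord_max) then 3 else C i j.
Proof. by rewrite mxE. Qed.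

Lemma tilde_max : tilde C ord_max ord_max = 3.
Proof. by rewrite tildeE !eqxx. Qed.

Lemma tilde_neq i j : i != j -> tilde C i j = C i j.
Proof.
rewrite tildeE; case: (i =P ord_max) => [-> mj|] //=.
by rewrite eq_sym (negPf mj).
Qed.

Lemma principal_tilde : principal (tilde C) = principal C.
Proof. by apply/matrixP => i j; rewrite !principalE tildeE lift_max_neq. Qed.

Lemma trmx_tilde : C^T = C -> (tilde C)^T = tilde C.
Proof.
move=> symC; apply/matrixP => i j; rewrite mxE !tildeE andbC.
by rewrite -[in RHS]symC mxE.
Qed.

Lemma tilde_add_delta :
  C = tilde C + (C ord_max ord_max - 3) *: delta_mx ord_max ord_max.
Proof.
apply/matrixP => i j; rewrite [RHS]mxE tildeE !mxE.
by case: ifP => [/andP[/eqP-> /eqP->]|_]; rewrite ?mulr1 ?subrKC ?mulr0 ?addr0.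
Qed.

Lemma det_tilde :
  \det C = \det (tilde C) + (C ord_max ord_max - 3) * \det (principal C).
Proof. by rewrite {1}tilde_add_delta det_add_delta_max principal_tilde. Qed.

End Tilde.

Section Extension.
Variable n : nat.
Hypotheses (n_mod4 : (n %% 4 = 3)%N) (n_gt3 : (3 < n)%N).

Lemma inCm_principal k (C : 'M[int]_k.+1) : inCm n C -> inCm n (principal C).
Proof.
case=> symC pC diagC modC; split.
- by rewrite trmx_principal symC.
- apply/posdefE; rewrite realmx_principal; apply: posdefmx_principal => //.
  by rewrite map_trmx symC.
- by move=> i; rewrite principalE diagC.
- by move=> i j; rewrite principalE modC.
Qed.

Lemma posdef_tilde k (C : 'M[int]_k.+1) :
  inCm n C -> 0 < \det (tilde C) -> posdef (tilde C).
Proof.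
case=> symC pC _ _ dC; apply/posdefE/posdefmx_of_det.
- by rewrite map_trmx trmx_tilde.
- rewrite -realmx_principal principal_tilde realmx_principal.
  by apply: posdefmx_principal => //; rewrite map_trmx symC.
- by rewrite det_realmx ltr0z.
Qed.

Lemma modz_tilde k (C : 'M[int]_k.+1) i j : inCm n C -> modz (tilde C i j) 4 = modz n 4.
Proof.
case=> _ _ _ modC; rewrite tildeE; case: ifP => _; last exact: modC.
by rewrite !modz_nat n_mod4.
Qed.

(* [extend G] borders [G] with a copy of the last row and column of [tilde G]
   and diagonal entry [n]. *)
Definition extend k (G : 'M[int]_k.+1) : 'M[int]_k.+2 :=
  \matrix_(i, j) if i == j then n%:Z else tilde G (merge_last i) (merge_last j).

Lemma extendE k (G : 'M[int]_k.+1) i j :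
  extend G i j = if i == j then n%:Z else tilde G (merge_last i) (merge_last j).
Proof. exact: mxE. Qed.

Lemma principal_extend k (G : 'M[int]_k.+1) :
  (forall i, G i i = n%:Z) -> principal (extend G) = G.
Proof.
move=> diagG; apply/matrixP => a b.
rewrite principalE extendE !merge_last_lift (inj_eq lift_inj).
by case: (a =P b) => [<-|/eqP ab]; rewrite ?diagG // tilde_neq.
Qed.

Lemma tilde_extend k (G : 'M[int]_k.+1) : (forall i, G i i = n%:Z) ->
  tilde (extend G) = mxsub merge_last merge_last (tilde G)
    + (n%:Z - 3) *: delta_mx (lift ord_max ord_max) (lift ord_max ord_max).
Proof.
move=> diagG; apply/matrixP => i j.
rewrite tildeE extendE [RHS]mxE [mxsub _ _ _ _ _]mxE [X in _ + X]mxE [X in _ * X]mxE.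
have [<-|ij] := eqVneq i j; last first.
  have diag_false (l : 'I_k.+2) : (i == l) && (j == l) = false.
    by apply: contraNF ij => /andP[/eqP-> /eqP->].
  by rewrite !diag_false mulr0 addr0.
case: (unliftP ord_max i) => [a|] ->.
  rewrite lift_max_neq merge_last_lift (inj_eq lift_inj) /=.
  case: (unliftP ord_max a) => [b|] ->; last by rewrite eqxx tilde_max mulr1 subrKC.
  by rewrite lift_max_neq tildeE lift_max_neq diagG mulr0 addr0.
by rewrite eqxx merge_last_max tilde_max eq_sym lift_max_neq mulr0 addr0.
Qed.

Lemma posdef_tilde_extend k (G : 'M[int]_k.+1) : (forall i, G i i = n%:Z) ->
  posdef (tilde G) -> posdef (tilde (extend G)).
Proof.
move=> diagG /posdefE pG; apply/posdefE; rewrite tilde_extend //.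
rewrite map_mxD map_mxZ map_mxsub map_delta_mx.
by apply: posdefmx_merge_last => //; rewrite ltr0z; lia.
Qed.

Lemma inCm_extend k (G : 'M[int]_k.+1) :
  inCm n G -> 0 < \det (tilde G) -> inCm n (extend G).
Proof.
move=> CG dG; have [symG _ diagG _] := CG.
have ptE := posdef_tilde_extend diagG (posdef_tilde CG dG).
split.
- apply/matrixP => i j; rewrite mxE !extendE eq_sym.
  by case: eqP => // _; rewrite -[in RHS](trmx_tilde symG) [in RHS]mxE.
- apply/posdefE; rewrite (tilde_add_delta (extend G)) map_mxD map_mxZ map_delta_mx.
  by apply: posdefmx_add_delta => //; rewrite extendE eqxx ler0z; lia.
- by move=> i; rewrite extendE eqxx.
- by move=> i j; rewrite extendE; case: eqP => _ //; exact: modz_tilde.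
Qed.

Lemma det_tilde_extend_gt0 k (G : 'M[int]_k.+1) :
  inCm n G -> 0 < \det (tilde G) -> 0 < \det (tilde (extend G)).
Proof.
move=> CG dG; apply: posdef_det_gt0.
  by rewrite trmx_tilde //; case: (inCm_extend CG dG).
by have [_ _ diagG _] := CG; apply: posdef_tilde_extend => //; exact: posdef_tilde.
Qed.

Lemma det_extend k (G : 'M[int]_k.+1) : (forall i, G i i = n%:Z) ->
  \det (extend G) = \det (tilde (extend G)) + (n%:Z - 3) * \det G.
Proof. by move=> diagG; rewrite det_tilde principal_extend // extendE eqxx. Qed.

End Extension.

Section Leading.
Variables (r : nat) (M : 'M[int]_r).

Lemma leading_eq (E : 'M[int]_r) : leading M E -> E = M.
Proof. by move=> lE; apply/matrixP => i j; exact: lE. Qed.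

Lemma leading_principal k (E : 'M[int]_k.+1) : leading M E -> leading M (principal E).
Proof.
move=> lE i j i' j' hi hj; rewrite principalE; apply: lE.
  by rewrite hi; exact/esym/lift_max.
by rewrite hj; exact/esym/lift_max.
Qed.

Lemma leading_of_principal k (E : 'M[int]_k.+1) :
  (r <= k)%N -> leading M (principal E) -> leading M E.
Proof.
move=> rk lP i j i' j' hi hj.
have liftE (a : 'I_r) (a' : 'I_k.+1) : val a = val a' ->
    exists2 b : 'I_k, a' = lift ord_max b & val a = val b.
  move=> ha; have ltak : (a' < k)%N by rewrite -ha (leq_trans (ltn_ord a)).
  by exists (Ordinal ltak) => //; apply: val_inj; exact/esym/lift_max.
have [b -> hb] := liftE _ _ hi; have [c -> hc] := liftE _ _ hj.
by rewrite -principalE; apply: lP.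
Qed.

End Leading.

Section LargerDeterminant.
Variables (n r : nat) (M : 'M[int]_r).
Hypotheses (n_mod4 : (n %% 4 = 3)%N) (n_gt3 : (3 < n)%N) (r_gt0 : (0 < r)%N).
Hypothesis detM : 0 < \det (tilde M).

Lemma inEm_principal k (E : 'M[int]_k.+1) : inEm n M E -> inEm n M (principal E).
Proof. by case=> CE lE; split; [exact: inCm_principal | exact: leading_principal]. Qed.

Lemma inEm_extend k (G : 'M[int]_k.+1) : (r <= k.+1)%N ->
  inEm n M G -> 0 < \det (tilde G) -> inEm n M (extend n G).
Proof.
move=> rk [CG lG] dG; split; first exact: inCm_extend.
by apply: leading_of_principal rk _; rewrite principal_extend //; case: CG.
Qed.

Lemma exists_larger_det k (E : 'M[int]_k.+1) :
  (r <= k.+1)%N -> inEm n M E -> \det (tilde E) <= 0 ->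
  exists2 E' : 'M[int]_k.+1, inEm n M E' & 0 < \det (tilde E') /\ \det E < \det E'.
Proof.
have M_good k' (E' : 'M[int]_k') : r = k' -> leading M E' -> \det (tilde E') <= 0 -> False.
  by move=> rk; subst k' => /leading_eq-> /(lt_le_trans detM); rewrite ltxx.
elim: k E => [|k IH] E rk EE dE.
  by exfalso; apply: (M_good _ E _ EE.2 dE); apply/eqP; rewrite eqn_leq rk r_gt0.
have [rk'|rk'] := leqP r k.+1; last first.
  by exfalso; apply: (M_good _ E _ EE.2 dE); apply/eqP; rewrite eqn_leq rk rk'.
have EP := inEm_principal EE.
have [F EF [dF leF]] : exists2 F : 'M[int]_k.+1, inEm n M F &
    0 < \det (tilde F) /\ \det (principal E) <= \det F.
  have [dP|dP] := ltP 0 (\det (tilde (principal E))); first by exists (principal E).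
  by have [F EF [dF ltF]] := IH _ rk' EP dP; exists F => //; split=> //; exact: ltW.
have dtE' := det_tilde_extend_gt0 n_mod4 n_gt3 EF.1 dF.
exists (extend n F); first exact: inEm_extend.
split=> //; have [[_ _ diagE _] _] := EE; have [[_ _ diagF _] _] := EF.
rewrite det_tilde det_extend // diagE.
have : (n%:Z - 3) * \det (principal E) <= (n%:Z - 3) * \det F.
  by rewrite ler_wpM2l // subr_ge0 lez_nat; apply: ltnW.
lia.
Qed.

End LargerDeterminant.

Theorem corollary1 (n r m : nat) (M : 'M[int]_r) (Estar : 'M[int]_m) :
  (n %% 4 = 3)%N -> (3 < n)%N ->
  (1 <= r)%N -> (r <= m)%N ->
  inCm n M ->
  0 < \det (tilde M) ->
  inEm n M Estar ->
  (forall E : 'M[int]_m, inEm n M E -> \det E <= \det Estar) ->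
  0 < \det (tilde Estar).
Proof.
move=> n_mod4 n_gt3 r_gt0 rm _ detM EEstar Estar_max.
case: m Estar rm EEstar Estar_max => [|k] Estar rm EEstar Estar_max.
  by move: (leq_trans r_gt0 rm).
rewrite ltNge; apply/negP => dE.
have [E' EE' [_ ltE']] := exists_larger_det n_mod4 n_gt3 r_gt0 detM rm EEstar dE.
by move: (Estar_max _ EE'); rewrite leNgt ltE'.
Qed.
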